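(* Let $\mathfrak{S}=(S,\to,;)$ be an implication semigroup containing an element $0$ such that for all $a\in S$ we have $0\le a$ and $0;a=a;0=0$. If $\mathfrak{S}$ is representable via some representation $h$, then there exists a representation $h'$ of $\mathfrak{S}$ with $h'(0)=\emptyset$. Moreover, if $h$ is defined over a finite base, so is $h'$.
   Context: An implication algebra is a pair $(A,\to)$ with $\to$ a binary operation satisfying, for all $a,b,c$: $(a\to b)\to a=a$; $(a\to b)\to b=(b\to a)\to a$; $a\to(b\to c)=b\to(a\to c)$. In it, $1:=a\to a$ does not depend on $a$, and $a\le b$ iff $a\to b=1$ is a partial order. An implication semigroup is $(S,\to,;)$ with $(S,\to)$ an implication algebra, $(S,;)$ a semigroup, and for all $a,b,c$: $((a\to b)\to b);c=(a;c\to b;c)\to b;c$ and $c;((a\to b)\to b)=(c;a\to c;b)\to c;b$. For a transitive relation $\top\subseteq X\times X$, $\mathfrak{S}(\top)=(\wp(\top),\to,;)$ with $a\to b=(\top\setminus a)\cup b$ and $;$ relational composition. A representation of $\mathfrak{S}$ is an embedding (injective map preserving $\to$ and $;$) $h:\mathfrak{S}\to\mathfrak{S}(\top)$ for some transitive $\top\subseteq X\times X$; $X$ is its base. *)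

From Stdlib Require Import List.

Definition implication_algebra (S : Type) (imp : S -> S -> S) : Prop :=
  (forall a b, imp (imp a b) a = a) /\
  (forall a b, imp (imp a b) b = imp (imp b a) a) /\
  (forall a b c, imp a (imp b c) = imp b (imp a c)).

(* The top element 1 := a -> a (independent of a in an implication algebra)
   and the induced order a <= b iff a -> b = 1. *)
Definition ia_le {S : Type} (imp : S -> S -> S) (a b : S) : Prop :=
  imp a b = imp a a.

Definition implication_semigroup (S : Type) (imp comp : S -> S -> S) : Prop :=
  implication_algebra S imp /\
  (forall a b c, comp a (comp b c) = comp (comp a b) c) /\
  (forall a b c, comp (imp (imp a b) b) c = imp (imp (comp a c) (comp b c)) (comp b c)) /\
  (forall a b c, comp c (imp (imp a b) b) = imp (imp (comp c a) (comp c b)) (comp c b)).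

Definition rel (X : Type) := X -> X -> Prop.

Definition transitive_rel {X : Type} (T : rel X) : Prop :=
  forall x y z, T x y -> T y z -> T x z.

Definition representation {S : Type} (imp comp : S -> S -> S)
  {X : Type} (T : rel X) (h : S -> rel X) : Prop :=
  transitive_rel T /\
  (forall a x y, h a x y -> T x y) /\
  (forall a b x y, h (imp a b) x y <-> ((T x y /\ ~ h a x y) \/ h b x y)) /\
  (forall a b x y, h (comp a b) x y <-> exists z, h a x z /\ h b z y) /\
  (forall a b, (forall x y, h a x y <-> h b x y) -> a = b).

Definition finite_type (X : Type) : Prop := exists l : list X, forall x, In x l.

From Stdlib Require Import List Classical.

(* h(0) is contained in every h(a) and is an ideal of the transitive relation T
   (0;1 = 1;0 = 0, where h(1) = T).  Take one copy of the base for every point s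
   and, in the copy indexed by s, keep a pair (p, q) only when p is s or lies
   T-above s and (s, q) is not in h(0).  The guard is the same for every element,
   so -> is preserved; composition survives because h(0) is T-closed, so the
   midpoint of a kept pair is kept; the copies together still separate the
   elements, since all of them agree on h(0); and h'(0) is empty because a pair
   (p, q) of h(0) with p above s would put (s, q) in h(0). *)

Section ConeLift.

Context {X : Type} (T Z : rel X).

Definition cone_lift (R : rel X) : rel (X * X) :=
  fun '(s, p) '(s', q) => s = s' /\ ~ Z s q /\ (s = p \/ T s p) /\ R p q.

Lemma cone_lift_sub (A B : rel X) :
  (forall x y, A x y -> B x y) ->
  forall P Q, cone_lift A P Q -> cone_lift B P Q.
Proof.
  intros AB [s p] [s' q] (E & N & D & H); repeat split; auto.
Qed.

Lemma cone_lift_trans : transitive_rel T -> transitive_rel (cone_lift T).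
Proof.
  intros T_trans [s p] [s' q] [s'' r] (E1 & _ & D1 & T1) (E2 & N2 & _ & T2).
  subst s'' s'; repeat split; eauto.
Qed.

Lemma cone_lift_imp (A B : rel X) P Q :
  cone_lift (fun x y => (T x y /\ ~ A x y) \/ B x y) P Q <->
  (cone_lift T P Q /\ ~ cone_lift A P Q) \/ cone_lift B P Q.
Proof.
  destruct P as [s p], Q as [s' q]; simpl; split.
  - intros (E & N & D & [[Tpq NA] | Bpq]).
    + left; split; [tauto | intros (_ & _ & _ & Apq); contradiction].
    + right; tauto.
  - intros [[(E & N & D & Tpq) NA] | (E & N & D & Bpq)];
      repeat split; auto.
    left; split; [exact Tpq | intro Apq; apply NA; tauto].
Qed.

Hypothesis T_trans : transitive_rel T.
Hypothesis Z_closed_r : forall x y z, Z x y -> T y z -> Z x z.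
Hypothesis Z_closed_l : forall x y z, T x y -> Z y z -> Z x z.

Lemma cone_lift_comp (A B : rel X) P Q :
  (forall x y, A x y -> T x y) -> (forall x y, B x y -> T x y) ->
  cone_lift (fun x y => exists z, A x z /\ B z y) P Q <->
  exists M, cone_lift A P M /\ cone_lift B M Q.
Proof.
  intros AT BT; destruct P as [s p], Q as [s' r]; split.
  - intros (E & N & D & q & Apq & Bqr).
    exists (s, q); simpl; repeat split; auto.
    + intro Zsq; apply N; eauto.
    + right; destruct D as [<- | Tsp]; eauto.
  - intros ([s1 q] & (E1 & _ & D & Apq) & (E2 & N & _ & Bqr)).
    subst s1 s'; repeat split; eauto.
Qed.

Lemma cone_lift_inj (A B : rel X) :
  (forall x y, Z x y -> A x y) -> (forall x y, Z x y -> B x y) ->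
  (forall P Q, cone_lift A P Q <-> cone_lift B P Q) ->
  forall x y, A x y <-> B x y.
Proof.
  intros ZA ZB AB x y.
  destruct (classic (Z x y)) as [Zxy | NZxy]; [split; auto |].
  assert (Hxy : forall R, cone_lift R (x, x) (x, y) <-> R x y) by
    (intro R; simpl; tauto).
  rewrite <- (Hxy A), <- (Hxy B); apply AB.
Qed.

Lemma cone_lift_ideal_empty P Q : ~ cone_lift Z P Q.
Proof.
  destruct P as [s p], Q as [s' q]; intros (_ & N & [<- | Tsp] & Zpq); eauto.
Qed.

End ConeLift.

Section Representation.

Context {S : Type} {imp comp : S -> S -> S} {X : Type} {T : rel X} {h : S -> rel X}.
Hypothesis Hh : representation imp comp T h.

Lemma representation_imp_self a x y : T x y -> h (imp a a) x y.
Proof.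
  destruct Hh as (_ & _ & Himp & _); intro Txy; apply Himp.
  destruct (classic (h a x y)); tauto.
Qed.

Lemma representation_le a b x y : ia_le imp a b -> h a x y -> h b x y.
Proof.
  destruct Hh as (_ & _ & Himp & _); intros Hab Haxy.
  assert (Himpab : h (imp a b) x y) by (rewrite Hab; apply Himp; now right).
  apply Himp in Himpab; tauto.
Qed.

Lemma representation_comp_top_r a b x y z :
  h a x y -> T y z -> h (comp a (imp b b)) x z.
Proof.
  destruct Hh as (_ & _ & _ & Hcomp & _); intros.
  apply Hcomp; exists y; split; [assumption | now apply representation_imp_self].
Qed.

Lemma representation_comp_top_l a b x y z :
  T x y -> h a y z -> h (comp (imp b b) a) x z.
Proof.
  destruct Hh as (_ & _ & _ & Hcomp & _); intros.
  apply Hcomp; exists y; split; [now apply representation_imp_self | assumption].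
Qed.

Lemma representation_cone_lift (Z : rel X) :
  (forall x y z, Z x y -> T y z -> Z x z) ->
  (forall x y z, T x y -> Z y z -> Z x z) ->
  (forall a x y, Z x y -> h a x y) ->
  representation imp comp (cone_lift T Z T) (fun a => cone_lift T Z (h a)).
Proof.
  intros Zr Zl Zh; destruct Hh as (T_trans & hT & Himp & Hcomp & Hinj).
  split; [| split; [| split; [| split]]].
  - now apply cone_lift_trans.
  - intro a; apply cone_lift_sub, hT.
  - intros a b P Q; rewrite <- cone_lift_imp.
    split; apply cone_lift_sub; intros x y; apply Himp.
  - intros a b P Q; rewrite <- cone_lift_comp by eauto.
    split; apply cone_lift_sub; intros x y; apply Hcomp.
  - intros a b Hab; apply Hinj, (cone_lift_inj T Z); auto.
Qed.

End Representation.

Lemma finite_type_prod (X Y : Type) :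
  finite_type X -> finite_type Y -> finite_type (X * Y).
Proof.
  intros [l Hl] [m Hm]; exists (list_prod l m); intros [x y]; apply in_prod; auto.
Qed.

Theorem lemma5 (S : Type) (imp comp : S -> S -> S) (zero : S)
  (HS : implication_semigroup S imp comp)
  (Hle0 : forall a, ia_le imp zero a)
  (Hl0 : forall a, comp zero a = zero)
  (Hr0 : forall a, comp a zero = zero)
  (X : Type) (T : rel X) (h : S -> rel X)
  (Hh : representation imp comp T h) :
  exists (X' : Type) (T' : rel X') (h' : S -> rel X'),
    representation imp comp T' h' /\
    (forall x y, ~ h' zero x y) /\
    (finite_type X -> finite_type X').
Proof.
  set (one := imp zero zero).
  assert (Z_closed_r : forall x y z, h zero x y -> T y z -> h zero x z).
  { intros; rewrite <- (Hl0 one); eapply (representation_comp_top_r Hh); eauto. }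
  assert (Z_closed_l : forall x y z, T x y -> h zero y z -> h zero x z).
  { intros; rewrite <- (Hr0 one); eapply (representation_comp_top_l Hh); eauto. }
  exists (X * X)%type, (cone_lift T (h zero) T),
    (fun a => cone_lift T (h zero) (h a)).
  split; [| split].
  - apply (representation_cone_lift Hh); auto.
    intros a x y; apply (representation_le Hh), Hle0.
  - intros P Q; apply cone_lift_ideal_empty; auto.
  - intro HX; now apply finite_type_prod.
Qed.
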